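(* Let $n,m\ge 1$, let $\Lambda\in\mathbb{R}^{n\times n}$ be Schur stable (all eigenvalues in the open unit disk), and let $W_{\mathrm{in}}\in\mathbb{R}^{n\times m}$, $W_{\mathrm{out}}\in\mathbb{R}^{m\times n}$. Consider the discrete-time recurrent neural network \[ x(k+1)=\Lambda x(k)+W_{\mathrm{in}}w(k)+v(k),\quad z(k)=W_{\mathrm{out}}x(k),\quad w(k)=\Phi(z(k)+s(k)),\quad k=0,1,2,\dots, \] with $x(0)=0$, external inputs $s:\{0,1,\dots\}\to\mathbb{R}^m$, $v:\{0,1,\dots\}\to\mathbb{R}^n$, and $\Phi$ the entrywise ReLU. Suppose $\Pi\in\mathbb{S}^{2m}$ satisfies the IQC \[ \sum_{k=0}^{\tau}\begin{bmatrix}\xi(k)\\ \zeta(k)\end{bmatrix}^T\Pi\begin{bmatrix}\xi(k)\\ \zeta(k)\end{bmatrix}\ge 0\quad\text{for all }\tau\in\{0,1,2,\dots\} \] for every signal $\xi\in l_{2e}$ (with values in $\mathbb{R}^m$) and $\zeta=\Phi\xi$ (i.e. $\zeta(k)=\Phi(\xi(k))$). If there exist a positive semidefinite $P\in\mathbb{S}^n$ and a diagonal matrix $S\in\mathbb{R}^{m\times m}$ with strictly positive diagonal entries such that \[ \begin{bmatrix}-P&0\\0&-S\end{bmatrix}+\begin{bmatrix}\Lambda&W_{\mathrm{in}}\\ W_{\mathrm{out}}&0\end{bmatrix}^T\begin{bmatrix}P&0\\0&S\end{bmatrix}\begin{bmatrix}\Lambda&W_{\mathrm{in}}\\ W_{\mathrm{out}}&0\end{bmatrix}+\begin{bmatrix}W_{\mathrm{out}}&0\\0&I_m\end{bmatrix}^T\Pi\begin{bmatrix}W_{\mathrm{out}}&0\\0&I_m\end{bmatrix}\prec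 0, \] then the RNN is finite gain $l_2$ stable from the input $[s^T\ v^T]^T$ to the output $[z^T\ w^T]^T$, i.e. there exists $\gamma\ge 0$ such that $\|[z^T\ w^T]^T_\tau\|_2\le\gamma\|[s^T\ v^T]^T_\tau\|_2$ for all $s,v\in l_{2e}$ and all $\tau\ge 0$.
   Context: The ReLU $\Phi:\mathbb{R}^m\to\mathbb{R}^m$ is $\Phi(\xi)=[\phi(\xi_1),\dots,\phi(\xi_m)]^T$ with $\phi(\eta)=\eta$ for $\eta\ge0$ and $\phi(\eta)=0$ for $\eta<0$. $\mathbb{S}^k$ denotes real symmetric $k\times k$ matrices; $A\prec0$ means negative definite. For a discrete-time signal $w$ on $\{0,1,2,\dots\}$, $\|w\|_2=\sqrt{\sum_{k\ge0}|w(k)|_2^2}$ with $|\cdot|_2$ the Euclidean norm; $l_2=\{w:\|w\|_2<\infty\}$; the truncation $w_\tau$ is $w_\tau(k)=w(k)$ for $k\le\tau$ and $0$ for $k>\tau$; $l_{2e}=\{w: w_\tau\in l_2\ \forall\tau\ge0\}$. *)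

From HB Require Import structures.
From mathcomp Require Import all_boot all_order all_algebra.
From mathcomp Require Import complex.
Set Implicit Arguments. Unset Strict Implicit. Unset Printing Implicit Defensive.
Import Order.TTheory GRing.Theory Num.Theory.
Local Open Scope ring_scope.

Definition relu1 {R : realDomainType} (a : R) : R := if 0 <= a then a else 0.
Definition ReLU {R : realDomainType} {m : nat} (u : 'cV[R]_m) : 'cV[R]_m :=
  map_mx relu1 u.

Definition qform {R : pzRingType} {n : nat} (M : 'M[R]_n) (u : 'cV[R]_n) : R :=
  ((u^T *m M *m u) 0 0).

Definition symmetric_mx {R : pzRingType} {n : nat} (M : 'M[R]_n) := M^T = M.

Definition psd {R : realDomainType} {n : nat} (M : 'M[R]_n) :=
  symmetric_mx M /\ forall u : 'cV[R]_n, 0 <= qform M u.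

Definition neg_def {R : realDomainType} {n : nat} (M : 'M[R]_n) :=
  symmetric_mx M /\ forall u : 'cV[R]_n, u != 0 -> qform M u < 0.

Definition schur_stable {R : rcfType} {n : nat} (L : 'M[R]_n) :=
  forall z : R[i], root (map_poly (real_complex R) (char_poly L)) z ->
    `|z| < 1.

Definition sqnorm {R : pzRingType} {m : nat} (u : 'cV[R]_m) : R :=
  \sum_(i < m) u i 0 ^+ 2.

Definition trunc_norm {R : rcfType} {m : nat} (f : nat -> 'cV[R]_m) (tau : nat) : R :=
  Num.sqrt (\sum_(k < tau.+1) sqnorm (f k)).

Fixpoint rnn_x {R : realDomainType} {n m : nat} (L : 'M[R]_n) (Win : 'M[R]_(n, m))
  (Wout : 'M[R]_(m, n)) (s : nat -> 'cV[R]_m) (v : nat -> 'cV[R]_n) (k : nat)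
  : 'cV[R]_n :=
  match k with
  | 0 => 0
  | k'.+1 => let x := rnn_x L Win Wout s v k' in
             L *m x + Win *m ReLU (Wout *m x + s k') + v k'
  end.

Definition rnn_z {R : realDomainType} {n m : nat} (L : 'M[R]_n) (Win : 'M[R]_(n, m))
  (Wout : 'M[R]_(m, n)) (s : nat -> 'cV[R]_m) (v : nat -> 'cV[R]_n) (k : nat)
  : 'cV[R]_m := Wout *m rnn_x L Win Wout s v k.

Definition rnn_w {R : realDomainType} {n m : nat} (L : 'M[R]_n) (Win : 'M[R]_(n, m))
  (Wout : 'M[R]_(m, n)) (s : nat -> 'cV[R]_m) (v : nat -> 'cV[R]_n) (k : nat)
  : 'cV[R]_m := ReLU (rnn_z L Win Wout s v k + s k).

Definition relu_iqc {R : realDomainType} {m : nat} (Pi : 'M[R]_(m + m)) :=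
  forall (xi : nat -> 'cV[R]_m) (tau : nat),
    0 <= \sum_(k < tau.+1) qform Pi (col_mx (xi k) (ReLU (xi k))).

From HB Require Import structures.
From mathcomp Require Import all_boot all_order all_algebra.
From mathcomp Require Import complex ring lra.
Set Implicit Arguments. Unset Strict Implicit. Unset Printing Implicit Defensive.
Import Order.TTheory GRing.Theory Num.Theory.
Local Open Scope ring_scope.

(* Take V(x) = x^T P x as storage function. Evaluating the LMI at (x(k), w(k))
   and adding the S-procedure term (for diagonal S >= 0 the ReLU does not increase
   |.|_S) yields the dissipation inequality
     V(x(k+1)) - V(x(k)) + IQC(k) <= C |(s(k), v(k))|^2 - e |(x(k), w(k))|^2,
   the cross terms between state and input being absorbed by Young's inequality.
   Summing over k, with V >= 0, V(x(0)) = 0 and the IQC, bounds the energy of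
   (x, w), hence of (z, w), by that of (s, v). Over an arbitrary real closed field
   the strict LMI is made quantitative, qform M u <= - e |u|^2, by induction on
   the dimension through Schur complements. *)

Section BilinearForms.
Variable R : rcfType.

Definition bil {p q} (A : 'M[R]_(p, q)) (a : 'cV[R]_p) (b : 'cV[R]_q) : R :=
  (a^T *m A *m b) 0 0.

Lemma qformE n (M : 'M[R]_n) u : qform M u = bil M u u.
Proof. by []. Qed.

Lemma bilE p q (A : 'M[R]_(p, q)) a b :
  bil A a b = \sum_(i < p) \sum_(j < q) a i 0 * A i j * b j 0.
Proof.
rewrite /bil mxE.
under eq_bigr => j _ do rewrite mxE big_distrl /=.
rewrite exchange_big /=; apply: eq_bigr => i _; apply: eq_bigr => j _.
by rewrite mxE.
Qed.

Lemma bilDm p q (A B : 'M[R]_(p, q)) a b : bil (A + B) a b = bil A a b + bil B a b.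
Proof. by rewrite /bil mulmxDr mulmxDl mxE. Qed.

Lemma bilNm p q (A : 'M[R]_(p, q)) a b : bil (- A) a b = - bil A a b.
Proof. by rewrite /bil mulmxN mulNmx mxE. Qed.

Lemma bilZm p q x (A : 'M[R]_(p, q)) a b : bil (x *: A) a b = x * bil A a b.
Proof. by rewrite /bil -scalemxAr -scalemxAl mxE. Qed.

Lemma bil0m p q (a : 'cV[R]_p) (b : 'cV[R]_q) : bil 0 a b = 0.
Proof. by rewrite /bil mulmx0 mul0mx mxE. Qed.

Lemma bil0x p q (A : 'M[R]_(p, q)) b : bil A 0 b = 0.
Proof. by rewrite /bil trmx0 !mul0mx mxE. Qed.

Lemma bilDl p q (A : 'M[R]_(p, q)) a a' b : bil A (a + a') b = bil A a b + bil A a' b.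
Proof. by rewrite /bil linearD /= !mulmxDl mxE. Qed.

Lemma bilDr p q (A : 'M[R]_(p, q)) a b b' : bil A a (b + b') = bil A a b + bil A a b'.
Proof. by rewrite /bil mulmxDr mxE. Qed.

Lemma bil_mul p q p' q' (A : 'M[R]_(p, q)) (G : 'M[R]_(p, p')) (H : 'M[R]_(q, q')) a b :
  bil A (G *m a) (H *m b) = bil (G^T *m A *m H) a b.
Proof. by rewrite /bil trmx_mul !mulmxA. Qed.

Lemma bil_tr p q (A : 'M[R]_(p, q)) a b : bil A a b = bil A^T b a.
Proof.
rewrite /bil; have -> : (a^T *m A *m b) 0 0 = (a^T *m A *m b)^T 0 0 by rewrite [in RHS]mxE.
by rewrite !trmx_mul trmxK mulmxA.
Qed.

Lemma bil_block p1 p2 q1 q2 (A : 'M[R]_(p1, q1)) (B : 'M[R]_(p1, q2))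
    (C : 'M[R]_(p2, q1)) (D : 'M[R]_(p2, q2)) a1 a2 b1 b2 :
  bil (block_mx A B C D) (col_mx a1 a2) (col_mx b1 b2) =
  bil A a1 b1 + bil B a1 b2 + bil C a2 b1 + bil D a2 b2.
Proof.
rewrite /bil tr_col_mx mul_row_block !mul_row_col !mulmxDl.
rewrite [LHS]mxE [X in X + _ = _]mxE [X in _ + X = _]mxE; ring.
Qed.

Lemma bil_scalar q (b : 'M[R]_(1, q)) (t : 'cV[R]_1) y : bil b t y = t 0 0 * (b *m y) 0 0.
Proof. by rewrite bilE big_ord1 mxE mulr_sumr; apply: eq_bigr => j _; rewrite mulrA. Qed.

Lemma sqnormE m (u : 'cV[R]_m) : sqnorm u = bil 1%:M u u.
Proof.
rewrite bilE /sqnorm; apply: eq_bigr => i _.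
rewrite (bigD1 i) //= big1 ?addr0; first by rewrite mxE eqxx mulr1 expr2.
by move=> j /negPf ji; rewrite mxE eq_sym ji mulr0 mul0r.
Qed.

Lemma sqnorm1 (t : 'cV[R]_1) : sqnorm t = t 0 0 ^+ 2.
Proof. by rewrite /sqnorm big_ord1. Qed.

Lemma sqnorm_col p q (a : 'cV[R]_p) (b : 'cV[R]_q) :
  sqnorm (col_mx a b) = sqnorm a + sqnorm b.
Proof.
by rewrite /sqnorm big_split_ord /=; congr (_ + _); apply: eq_bigr => i _;
  rewrite ?col_mxEu ?col_mxEd.
Qed.

Lemma sqnorm_ge0 p (a : 'cV[R]_p) : 0 <= sqnorm a.
Proof. by apply: sumr_ge0 => i _; rewrite sqr_ge0. Qed.

Lemma sqnorm_entry p (a : 'cV[R]_p) i : a i 0 ^+ 2 <= sqnorm a.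
Proof. by rewrite /sqnorm (bigD1 i) //= lerDl; apply: sumr_ge0 => j _; apply: sqr_ge0. Qed.

End BilinearForms.

Section Domination.
Variable R : rcfType.

Lemma young_ineq (e x y : R) : 0 < e -> 0 <= x -> 0 <= y ->
  x * y <= e * x ^+ 2 + y ^+ 2 / e.
Proof.
move=> e0 x0 y0.
have h : 0 <= (e * x - y) ^+ 2 / e by rewrite divr_ge0 ?sqr_ge0 ?ltW.
have -> : e * x ^+ 2 + y ^+ 2 / e = (e * x - y) ^+ 2 / e + 2 * (x * y).
  by field; rewrite gt_eqF.
nra.
Qed.

Definition dominated {N K} (f : 'cV[R]_N -> 'cV[R]_K -> R) :=
  forall d, 0 < d -> exists C, 0 <= C /\
    forall a b, `|f a b| <= d * sqnorm a + C * sqnorm b.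

Lemma dominated_bil p q (A : 'M[R]_(p, q)) : dominated (bil A).
Proof.
move=> d d0.
set K := \sum_(i < p) \sum_(j < q) `|A i j|.
have K0 : 0 <= K by apply: sumr_ge0 => i _; apply: sumr_ge0 => j _.
set e := d / (K + 1).
have e0 : 0 < e by rewrite divr_gt0 // ltr_wpDl.
exists (K / e); split; first by rewrite divr_ge0 // ltW.
move=> a b; rewrite bilE; apply: le_trans (ler_norm_sum _ _ _) _.
have row_bound i : `|\sum_(j < q) a i 0 * A i j * b j 0| <=
    \sum_(j < q) `|A i j| * (e * sqnorm a + sqnorm b / e).
  apply: le_trans (ler_norm_sum _ _ _) _; apply: ler_sum => j _.
  rewrite !normrM [`|a i 0| * _]mulrC -mulrA ler_wpM2l //.
  apply: le_trans (young_ineq e0 (normr_ge0 _) (normr_ge0 _)) _.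
  rewrite !real_normK ?num_real //; apply: lerD.
    by apply: ler_wpM2l; [exact: ltW | exact: sqnorm_entry].
  by apply: ler_wpM2r; [rewrite invr_ge0 ltW | exact: sqnorm_entry].
apply: le_trans (ler_sum _ (fun i _ => row_bound i)) _.
under eq_bigr => i _ do rewrite -big_distrl.
rewrite -big_distrl /= -/K mulrDr; apply: lerD; last by rewrite mulrA mulrAC.
rewrite mulrA ler_wpM2r ?sqnorm_ge0 // /e mulrA ler_pdivrMr ?ltr_wpDl //.
nra.
Qed.

Lemma dominatedD N K (f g : 'cV[R]_N -> 'cV[R]_K -> R) :
  dominated f -> dominated g -> dominated (fun a b => f a b + g a b).
Proof.
move=> hf hg d d0.
have d20 : 0 < d / 2 by rewrite divr_gt0.
have [C1 [C10 H1]] := hf _ d20; have [C2 [C20 H2]] := hg _ d20.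
exists (C1 + C2); split; first by rewrite addr_ge0.
move=> a b; apply: le_trans (ler_normD _ _) _.
have := H1 a b; have := H2 a b; have := sqnorm_ge0 a; have := sqnorm_ge0 b.
lra.
Qed.

Lemma dominated_bil_mul N K p q (A : 'M[R]_(p, q)) (G : 'M[R]_(p, N)) (H : 'M[R]_(q, K)) :
  dominated (fun a b => bil A (G *m a) (H *m b)).
Proof.
move=> d d0; have [C [C0 HC]] := dominated_bil (G^T *m A *m H) d0.
by exists C; split => // a b; rewrite bil_mul.
Qed.

Lemma bil_diag_le p q K (A : 'M[R]_(p, q)) (G : 'M[R]_(p, K)) (H : 'M[R]_(q, K)) :
  exists C, 0 <= C /\ forall b, `|bil A (G *m b) (H *m b)| <= C * sqnorm b.
Proof.
have [C [C0 HC]] := dominated_bil (G^T *m A *m H) ltr01.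
exists (1 + C); split => [|b]; first by rewrite addr_ge0.
by rewrite bil_mul mulrDl; exact: HC.
Qed.

Lemma sqnorm_mul_le p q (A : 'M[R]_(p, q)) :
  exists C, 0 <= C /\ forall u, sqnorm (A *m u) <= C * sqnorm u.
Proof.
have [C [C0 HC]] := bil_diag_le (1%:M : 'M[R]_p) A A.
by exists C; split => // u; rewrite sqnormE; apply: le_trans (ler_norm _) (HC u).
Qed.

Definition qshift {p N K} (A : 'M[R]_p) (G : 'M[R]_(p, N)) (H : 'M[R]_(p, K))
    (a : 'cV[R]_N) (b : 'cV[R]_K) :=
  qform A (G *m a + H *m b) - qform A (G *m a).

Lemma dominated_qshift p N K (A : 'M[R]_p) (G : 'M[R]_(p, N)) (H : 'M[R]_(p, K)) :
  dominated (qshift A G H).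
Proof.
have expand a b : qshift A G H a b = bil A (G *m a) (H *m b)
    + bil A^T (G *m a) (H *m b) + bil A (H *m b) (H *m b).
  by rewrite /qshift !qformE !bilDl !bilDr [bil A (H *m b) _]bil_tr; ring.
have input_part : dominated (fun (a : 'cV[R]_N) b => bil A (H *m b) (H *m b)).
  move=> d d0; have [C [C0 HC]] := bil_diag_le A H H.
  exists C; split => // a b; apply: le_trans (HC b) _.
  by rewrite lerDr mulr_ge0 ?sqnorm_ge0 ?ltW.
move=> d d0.
have [C [C0 HC]] := dominatedD (dominatedD (dominated_bil_mul A G H)
  (dominated_bil_mul A^T G H)) input_part d0.
by exists C; split => // a b; rewrite expand; apply: HC.
Qed.

End Domination.

Section UniformNegativity.
Variable R : rcfType.

Lemma sqr_shift_bound (A K e' e t h q y : R) : 0 <= y -> h ^+ 2 <= K * y ->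
  q <= - e' * y -> 0 < e -> 2 * e <= A -> e * (2 * K + 1) <= e' ->
  - A * (t + h) ^+ 2 + q <= - e * (t ^+ 2 + y).
Proof.
move=> y0 hK hq e0 eA eK.
have t_sq : t ^+ 2 <= 2 * (t + h) ^+ 2 + 2 * h ^+ 2 by have := sqr_ge0 (t + 2 * h); nra.
have h_sq : e * h ^+ 2 <= e * (K * y) by rewrite ler_pM2l.
have th_sq : 2 * e * (t + h) ^+ 2 <= A * (t + h) ^+ 2 by apply: ler_wpM2r; rewrite ?sqr_ge0.
have y_part : e * (2 * K + 1) * y <= e' * y by apply: ler_wpM2r.
nra.
Qed.

Section SchurComplement.
Variables (N : nat) (a : 'M[R]_1) (b : 'M[R]_(1, N)) (d : 'M[R]_N).
Local Notation al := (a 0 0).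
Local Notation M := (block_mx a b b^T d : 'M[R]_(1 + N)).

Definition schur_complement := d - al^-1 *: (b^T *m b).

Lemma schur_complement_sym : d^T = d -> schur_complement^T = schur_complement.
Proof. by move=> dsym; rewrite linearB linearZ /= trmx_mul trmxK dsym. Qed.

Lemma qform_block1 t y :
  qform M (col_mx t y) = al * t 0 0 ^+ 2 + 2 * t 0 0 * (b *m y) 0 0 + qform d y.
Proof.
rewrite !qformE bil_block bil_scalar [bil b^T _ _]bil_tr trmxK bil_scalar.
by rewrite [(a *m t) 0 0]mxE big_ord1; ring.
Qed.

Lemma qform_schur y : qform schur_complement y = qform d y - al^-1 * (b *m y) 0 0 ^+ 2.
Proof.
rewrite !qformE bilDm bilNm bilZm; congr (_ - _ * _).
have -> : b^T *m b = b^T *m 1%:M *m b by rewrite mulmx1.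
by rewrite -bil_mul bil_scalar mul1mx expr2.
Qed.

Lemma qform_block1_schur t y : al != 0 ->
  qform M (col_mx t y) = al * (t 0 0 + (b *m y) 0 0 / al) ^+ 2 + qform schur_complement y.
Proof. by move=> al0; rewrite qform_block1 qform_schur; field. Qed.

Hypothesis M_neg : forall u, u != 0 -> qform M u < 0.

Lemma block1_corner_lt0 : al < 0.
Proof.
have nz : col_mx (1%:M : 'M[R]_1) (0 : 'cV[R]_N) != 0.
  by rewrite col_mx_eq0 negb_and oner_eq0.
by have := M_neg nz; rewrite qform_block1 mulmx0 qformE bil0x !mxE mulr0 !addr0 expr1n mulr1.
Qed.

Lemma schur_complement_neg y : y != 0 -> qform schur_complement y < 0.
Proof.
move=> y0; have al0 : al != 0 by rewrite lt_eqF ?block1_corner_lt0.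
have nz : col_mx ((- (b *m y) 0 0 / al)%:M : 'cV[R]_1) y != 0.
  by rewrite col_mx_eq0 negb_and y0 orbT.
by have := M_neg nz; rewrite qform_block1_schur // mxE mulr1n mulNr addNr expr0n mulr0 add0r.
Qed.

Lemma block1_neg_bound e' : 0 < e' ->
    (forall y, qform schur_complement y <= - e' * sqnorm y) ->
  exists e, 0 < e /\ forall u, qform M u <= - e * sqnorm u.
Proof.
move=> e'0 He'.
set A := - al; have A0 : 0 < A by rewrite oppr_gt0 block1_corner_lt0.
have [C [C0 HC]] := bil_diag_le (1%:M : 'M[R]_1) b b.
set K := C / A ^+ 2; have K0 : 0 <= K by rewrite divr_ge0 ?sqr_ge0.
have K1 : 0 < 2 * K + 1 by lra.
exists (Num.min (A / 2) (e' / (2 * K + 1))); split.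
  by rewrite lt_min !divr_gt0.
move=> u; rewrite -[u]vsubmxK qform_block1_schur ?lt_eqF ?block1_corner_lt0 //.
rewrite sqnorm_col sqnorm1 -/A.
have -> : al = - A by rewrite opprK.
apply: (sqr_shift_bound (K := K) (e' := e')) => //.
- exact: sqnorm_ge0.
- rewrite /K expr_div_n sqrrN [C / _ * _]mulrAC ler_pM2r ?invr_gt0 ?exprn_gt0 //.
  have := HC (dsubmx u); rewrite -sqnormE sqnorm1; exact: le_trans (ler_norm _).
- by rewrite lt_min !divr_gt0.
- by rewrite mulrC -ler_pdivlMr // ge_min lexx.
- by rewrite -ler_pdivlMr // ge_min lexx orbT.
Qed.

End SchurComplement.

Lemma neg_def_uniform N (M : 'M[R]_N) :
  neg_def M -> exists e, 0 < e /\ forall u, qform M u <= - e * sqnorm u.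
Proof.
elim: N M => [|N IH] M [Msym Mneg].
  by exists 1; split => // u; rewrite qformE bilE /sqnorm !big_ord0 mulr0.
move: Msym Mneg; rewrite -[M](submxK (M : 'M_(1 + N))).
set a := ulsubmx _; set b := ursubmx _; set c := dlsubmx _; set d := drsubmx _.
move=> Msym Mneg.
have /eq_block_mx[_ _ cE dsym] : block_mx a^T c^T b^T d^T = block_mx a b c d.
  by rewrite -tr_block_mx.
rewrite -cE in Mneg *.
have [e' [e'0 He']] := IH _ (conj (schur_complement_sym a b dsym) (schur_complement_neg Mneg)).
exact: block1_neg_bound He'.
Qed.

End UniformNegativity.

Section Dissipation.
Variable R : rcfType.

Lemma qform_diag_ReLU_le m (S : 'M[R]_m) (xi : 'cV[R]_m) :
  is_diag_mx S -> (forall i, 0 <= S i i) -> qform S (ReLU xi) <= qform S xi.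
Proof.
move=> /is_diag_mxP Sdiag Spos.
have diagE u : qform S u = \sum_i S i i * u i 0 ^+ 2.
  rewrite qformE bilE; apply: eq_bigr => i _.
  rewrite (bigD1 i) //= big1 ?addr0; first by rewrite expr2; ring.
  by move=> j ji; rewrite Sdiag ?mulr0 ?mul0r // eq_sym.
rewrite !diagE; apply: ler_sum => i _; apply: ler_wpM2l => //.
by rewrite mxE /relu1; case: ifP => // _; rewrite expr0n sqr_ge0.
Qed.

Lemma sum_dissipation (V q f : nat -> R) : V 0%N = 0 ->
    (forall k, V k.+1 - V k + q k <= f k) ->
  forall t, V t + \sum_(k < t) q k <= \sum_(k < t) f k.
Proof.
move=> V0 step; elim=> [|t IHt]; first by rewrite !big_ord0 V0 addr0.
by rewrite !big_ord_recr /=; have := step t; lra.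
Qed.

End Dissipation.

Section RNN.
Variables (R : rcfType) (n m : nat) (L : 'M[R]_n) (Win : 'M[R]_(n, m))
  (Wout : 'M[R]_(m, n)) (Pi : 'M[R]_(m + m)) (P : 'M[R]_n) (S : 'M[R]_m).

Definition lmi_mx :=
  block_mx (- P) 0 0 (- S)
  + (block_mx L Win Wout 0)^T *m block_mx P 0 0 S *m block_mx L Win Wout 0
  + (block_mx Wout 0 0 (1%:M : 'M[R]_m))^T *m Pi *m block_mx Wout 0 0 (1%:M : 'M[R]_m).

Lemma qform_lmi x w : qform lmi_mx (col_mx x w) =
  qform P (L *m x + Win *m w) - qform P x + qform S (Wout *m x) - qform S w
  + qform Pi (col_mx (Wout *m x) w).
Proof.
rewrite /lmi_mx !qformE !bilDm -!bil_mul !mul_block_col !bil_block.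
by rewrite !mul0mx !addr0 add0r mul1mx !bil0m !bilNm; ring.
Qed.

(* Each [G *m u] is an argument of a quadratic form of the LMI built from
   [u = (x, w)]; [H *m r] adds the input [r = (s, v)]: [v] enters the state
   update and [s] the argument of the ReLU. *)
Definition input_effect (u : 'cV[R]_(n + m)) (r : 'cV[R]_(m + n)) :=
  qshift P (row_mx L Win) (row_mx 0 1%:M) u r
  + qshift Pi (block_mx Wout 0 0 1%:M) (col_mx (row_mx 1%:M 0) 0) u r
  + qshift S (row_mx Wout 0) (row_mx 1%:M 0) u r.

Lemma dominated_input_effect : dominated input_effect.
Proof. by apply: dominatedD; [apply: dominatedD |]; apply: dominated_qshift. Qed.

Hypotheses (S_diag : is_diag_mx S) (S_pos : forall i, 0 <= S i i).

Lemma rnn_step x s v (w := ReLU (Wout *m x + s)) :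
  qform P (L *m x + Win *m w + v) - qform P x + qform Pi (col_mx (Wout *m x + s) w)
  <= qform lmi_mx (col_mx x w) + input_effect (col_mx x w) (col_mx s v).
Proof.
have := qform_diag_ReLU_le (Wout *m x + s) S_diag S_pos; rewrite -/w.
rewrite qform_lmi /input_effect /qshift !mul_block_col !mul_col_mx !mul_row_col.
rewrite !mul0mx !mul1mx !addr0 !add0r add_col_mx addr0.
lra.
Qed.

Hypotheses (P_psd : forall x, 0 <= qform P x) (Pi_iqc : relu_iqc Pi)
  (lmi_neg : neg_def lmi_mx).

Local Notation x := (rnn_x L Win Wout).
Local Notation z := (rnn_z L Win Wout).
Local Notation w := (rnn_w L Win Wout).

Lemma rnn_dissipation : exists e C, [/\ 0 < e, 0 <= C & forall s v k,
  qform P (x s v k.+1) - qform P (x s v k) + qform Pi (col_mx (z s v k + s k) (w s v k))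
  <= C * sqnorm (col_mx (s k) (v k)) - e * sqnorm (col_mx (x s v k) (w s v k))].
Proof.
have [e [e0 He]] := neg_def_uniform lmi_neg.
have e20 : 0 < e / 2 by rewrite divr_gt0.
have [C [C0 HC]] := dominated_input_effect e20.
exists (e / 2), C; split => // s v k.
have := rnn_step (x s v k) (s k) (v k).
have := He (col_mx (x s v k) (w s v k)).
have := le_trans (ler_norm _) (HC (col_mx (x s v k) (w s v k)) (col_mx (s k) (v k))).
rewrite /rnn_w /rnn_z /=; lra.
Qed.

Lemma rnn_energy_bound : exists c, 0 <= c /\ forall s v tau,
  \sum_(k < tau.+1) sqnorm (col_mx (x s v k) (w s v k))
  <= c * \sum_(k < tau.+1) sqnorm (col_mx (s k) (v k)).
Proof.
have [e [C [e0 C0 diss]]] := rnn_dissipation.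
exists (C / e); split => [|s v tau]; first by rewrite divr_ge0 // ltW.
have V0 : qform P (x s v 0%N) = 0 by rewrite qformE bil0x.
have := sum_dissipation V0 (diss s v) tau.+1.
rewrite sumrB -!mulr_sumr.
have := P_psd (x s v tau.+1).
have := Pi_iqc (fun k => z s v k + s k) tau.
rewrite mulrAC ler_pdivlMr //; rewrite /rnn_w; lra.
Qed.

Lemma rnn_finite_gain : exists gamma, 0 <= gamma /\ forall s v tau,
  trunc_norm (fun k => col_mx (z s v k) (w s v k)) tau
  <= gamma * trunc_norm (fun k => col_mx (s k) (v k)) tau.
Proof.
have [c [c0 energy]] := rnn_energy_bound.
have [cW [cW0 HW]] := sqnorm_mul_le Wout.
have cW1 : 0 <= 1 + cW by rewrite addr_ge0.
exists (Num.sqrt ((1 + cW) * c)); split => [|s v tau]; first exact: sqrtr_ge0.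
rewrite /trunc_norm -sqrtrM ?mulr_ge0 // ler_sqrt ?mulr_ge0 ?sumr_ge0 //; last first.
  by move=> k _; apply: sqnorm_ge0.
rewrite -mulrA; apply: le_trans (ler_wpM2l cW1 (energy s v tau)).
rewrite mulr_sumr; apply: ler_sum => k _; rewrite !sqnorm_col.
have := HW (x s v k); have := sqnorm_ge0 (x s v k); have := sqnorm_ge0 (w s v k).
have := mulr_ge0 cW0 (sqnorm_ge0 (w s v k)); rewrite /rnn_z; lra.
Qed.

End RNN.

Theorem theorem1 (R : rcfType) (n m : nat) (Hn : (0 < n)%N) (Hm : (0 < m)%N)
  (L : 'M[R]_n) (Win : 'M[R]_(n, m)) (Wout : 'M[R]_(m, n))
  (Pi : 'M[R]_(m + m)) :
  schur_stable L ->
  symmetric_mx Pi ->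
  relu_iqc Pi ->
  (exists (P : 'M[R]_n) (S : 'M[R]_m),
      psd P /\ is_diag_mx S /\ (forall i, 0 < S i i) /\
      neg_def (block_mx (- P) 0 0 (- S)
               + (block_mx L Win Wout 0)^T *m block_mx P 0 0 S *m block_mx L Win Wout 0
               + (block_mx Wout 0 0 (1%:M : 'M[R]_m))^T *m Pi
                   *m block_mx Wout 0 0 (1%:M : 'M[R]_m))) ->
  exists gamma : R, 0 <= gamma /\
    forall (s : nat -> 'cV[R]_m) (v : nat -> 'cV[R]_n) (tau : nat),
      trunc_norm (fun k => col_mx (rnn_z L Win Wout s v k) (rnn_w L Win Wout s v k)) tau
      <= gamma * trunc_norm (fun k => col_mx (s k) (v k)) tau.
Proof.
move=> _ _ Pi_iqc [P [S [[_ P_psd] [S_diag [S_pos lmi_neg]]]]].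
have S_nneg i : 0 <= S i i by apply: ltW.
exact: rnn_finite_gain S_diag S_nneg P_psd Pi_iqc lmi_neg.
Qed.
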